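(* Let $\mathcal{A}$ be a finite totally ordered alphabet and let $\mathbf{Plax}(\mathcal{A})$ be the plactic monoid over $\mathcal{A}$. Then $\mathbf{Plax}(\mathcal{A})$ is of type 1: for every function $\sigma:\mathcal{A}\to\mathbb{N}_{\geq 2}$, the map $\phi_\sigma=\theta\times\operatorname{ev}_\sigma:\mathbf{Plax}(\mathcal{A},\sigma)\to \mathbf{Plax}(\mathcal{A},2)\times\mathbf{Com}(\mathcal{A},\sigma)$ is injective.
   Context: The plactic monoid $\mathbf{Plax}(\mathcal{A})$ is the quotient of the free monoid $\mathcal{A}^*$ by the relations $acb=cab$ for $a\le b<c$ and $bac=bca$ for $a<b\le c$ ($a,b,c\in\mathcal{A}$). For $\sigma:\mathcal{A}\to\mathbb{N}_{\geq2}$, $\mathbf{Plax}(\mathcal{A},\sigma)$ is the quotient of $\mathbf{Plax}(\mathcal{A})$ obtained by adding the relations $a^{\sigma(a)}=a$ for every $a\in\mathcal{A}$; $\mathbf{Plax}(\mathcal{A},2)$ is the case where $\sigma$ is constant equal to $2$. $\mathbf{Com}(\mathcal{A},\sigma)$ is the quotient of the free commutative monoid on $\mathcal{A}$ by the relations $a^{\sigma(a)}=a$, $a\in\mathcal{A}$. The map $\theta:\mathbf{Plax}(\mathcal{A},\sigma)\to\mathbf{Plax}(\mathcal{A},2)$ and $\operatorname{ev}_\sigma:\mathbf{Plax}(\mathcal{A},\sigma)\to\mathbf{Com}(\mathcal{A},\sigma)$ are the natural surjective morphisms (induced by the identity on $\mathcal{A}$), and $\phi_\sigma(x)=(\theta(x),\operatorname{ev}_\sigma(x))$.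 *)

From Stdlib Require Import Relations.Relation_Definitions Relations.Relation_Operators.
From mathcomp Require Import all_boot.
Set Implicit Arguments. Unset Strict Implicit. Unset Printing Implicit Defensive.

Section Plactic.
Variable n : nat.
Notation word := (seq 'I_n).

Inductive knuth_step : word -> word -> Prop :=
| knuth1 (u v : word) (a b c : 'I_n) :
    a <= b -> b < c -> knuth_step (u ++ [:: a; c; b] ++ v) (u ++ [:: c; a; b] ++ v)
| knuth2 (u v : word) (a b c : 'I_n) :
    a < b -> b <= c -> knuth_step (u ++ [:: b; a; c] ++ v) (u ++ [:: b; c; a] ++ v).

Inductive pow_step (sigma : 'I_n -> nat) : word -> word -> Prop :=
| powstep (u v : word) (a : 'I_n) :
    pow_step sigma (u ++ nseq (sigma a) a ++ v) (u ++ [:: a] ++ v).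

Inductive comm_step : word -> word -> Prop :=
| commstep (u v : word) (a b : 'I_n) :
    comm_step (u ++ [:: a; b] ++ v) (u ++ [:: b; a] ++ v).

Definition plax_sigma_cong (sigma : 'I_n -> nat) : relation word :=
  clos_refl_sym_trans word (fun x y => knuth_step x y \/ pow_step sigma x y).

Definition com_sigma_cong (sigma : 'I_n -> nat) : relation word :=
  clos_refl_sym_trans word (fun x y => comm_step x y \/ pow_step sigma x y).

End Plactic.

From Stdlib Require Import Relations.Relation_Definitions Relations.Relation_Operators.
From Stdlib Require Import RelationClasses.
From mathcomp Require Import all_boot zify.
Set Implicit Arguments. Unset Strict Implicit. Unset Printing Implicit Defensive.

(* Write u ~ v for equality in Plax(A, sigma).  A word x1^(e1+1) ... xk^(ek+1) is an
   expansion of its skeleton x1 ... xk.  Every defining move of Plax(A, 2) between skeletons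
   lifts to a ~-equivalence between expansions: a^i c^j b^l and c^j a^i b^l are plactic
   equivalent as soon as the block of b's is longer than the block of c's (symmetrically for the
   second Knuth relation), and in Plax(A, sigma) a block b^(l+1) may be lengthened by multiples
   of sigma(b) - 1.  Hence theta(u) = theta(v) gives u ~ w for an expansion w of v.  If moreover
   ev_sigma(u) = ev_sigma(v), the total surplus exponent of each letter in w is a multiple of
   sigma(x) - 1.  Surplus moves freely between two occurrences of a letter, because
   y^N q y^M and y^(N+1) q y^(M-1) have the same Schensted P-tableau when both blocks are long,
   so it can be gathered in a single block and erased with x^sigma(x) = x: w ~ v. *)

(** * Congruences on words *)

#[export] Instance rst_Equivalence (A : Type) (R : relation A) :
  Equivalence (clos_refl_sym_trans A R).
Proof. split; [exact: rst_refl | exact: rst_sym | exact: rst_trans]. Qed.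

Lemma rst_homo (A B : Type) (R : relation A) (S : relation B) (f : A -> B) x y :
  (forall x y, R x y -> clos_refl_sym_trans B S (f x) (f y)) ->
  clos_refl_sym_trans A R x y -> clos_refl_sym_trans B S (f x) (f y).
Proof.
move=> fR; elim=> [x1 y1 /fR //|x1|x1 y1 _ IH|x1 y1 z1 _ IH1 _ IH2].
- reflexivity.
- by symmetry.
- by transitivity (f y1).
Qed.

Lemma rst_sub (A : Type) (R S : relation A) x y :
  (forall x y, R x y -> S x y) ->
  clos_refl_sym_trans A R x y -> clos_refl_sym_trans A S x y.
Proof. by move=> RS; apply: (@rst_homo A A R S id) => x1 y1 /RS; apply: rst_step. Qed.

Lemma rst_invariant (A B : Type) (R : relation A) (f : A -> B) x y :
  (forall x y, R x y -> f x = f y) -> clos_refl_sym_trans A R x y -> f x = f y.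
Proof. by move=> fR; elim=> // [x1 y1 z1 _ -> _ ->]. Qed.

Section WordCongruence.
Variables (T : Type) (R : relation (seq T)).
Hypothesis R_ctx : forall p q x y, R x y -> R (p ++ x ++ q) (p ++ y ++ q).
Local Notation cong := (clos_refl_sym_trans (seq T) R).

Lemma rst_ctx p q x y : cong x y -> cong (p ++ x ++ q) (p ++ y ++ q).
Proof.
by apply: (rst_homo (f := fun w => p ++ w ++ q)) => x1 y1 /(R_ctx p q); apply: rst_step.
Qed.

Lemma rst_catl p x y : cong x y -> cong (p ++ x) (p ++ y).
Proof. by move=> /(rst_ctx p [::]); rewrite !cats0. Qed.

Lemma rst_catr q x y : cong x y -> cong (x ++ q) (y ++ q).
Proof. exact: rst_ctx [::] q x y. Qed.

Lemma rst_cat x x' y y' : cong x x' -> cong y y' -> cong (x ++ y) (x' ++ y').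
Proof. by move=> /(rst_catr y) Hx /(rst_catl x') Hy; transitivity (x' ++ y). Qed.

Lemma rst_cons a x y : cong x y -> cong (a :: x) (a :: y).
Proof. exact: rst_catl [:: a] x y. Qed.

End WordCongruence.

Lemma rcons_nseq (T : Type) m (x : T) : rcons (nseq m x) x = nseq m.+1 x.
Proof. by elim: m => //= m ->. Qed.

Section Plactic.
Variable n : nat.
Local Notation word := (seq 'I_n).

Definition plactic : relation word := clos_refl_sym_trans word (@knuth_step n).

Lemma knuth_step_ctx (p q x y : word) :
  knuth_step x y -> knuth_step (p ++ x ++ q) (p ++ y ++ q).
Proof.
case=> u v a b c Hab Hbc.
- by have := knuth1 (p ++ u) (v ++ q) Hab Hbc; rewrite -!catA.
- by have := knuth2 (p ++ u) (v ++ q) Hab Hbc; rewrite -!catA.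
Qed.

Lemma plactic_ctx p q x y : plactic x y -> plactic (p ++ x ++ q) (p ++ y ++ q).
Proof. exact: (rst_ctx knuth_step_ctx p q). Qed.

Lemma plactic_catl p x y : plactic x y -> plactic (p ++ x) (p ++ y).
Proof. exact: (rst_catl knuth_step_ctx p). Qed.

Lemma plactic_catr q x y : plactic x y -> plactic (x ++ q) (y ++ q).
Proof. exact: (rst_catr knuth_step_ctx q). Qed.

Lemma plactic_cons a x y : plactic x y -> plactic (a :: x) (a :: y).
Proof. exact: (rst_cons knuth_step_ctx a). Qed.

Lemma plactic_knuth1 (a b c : 'I_n) : a <= b -> b < c -> plactic [:: a; c; b] [:: c; a; b].
Proof. by move=> Hab Hbc; apply: rst_step; exact: (knuth1 [::] [::] Hab Hbc). Qed.

Lemma plactic_knuth2 (a b c : 'I_n) : a < b -> b <= c -> plactic [:: b; a; c] [:: b; c; a].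
Proof. by move=> Hab Hbc; apply: rst_step; exact: (knuth2 [::] [::] Hab Hbc). Qed.

Definition ord_leq : rel 'I_n := fun a b => a <= b.

Lemma ord_leq_trans : transitive ord_leq.
Proof. by move=> a b c; apply: leq_trans. Qed.

Lemma sorted_consE (r : 'I_n) R :
  sorted ord_leq (r :: R) = all (ord_leq r) R && sorted ord_leq R.
Proof. exact: (path_sortedE ord_leq_trans). Qed.

Lemma knuth1_row (X : word) (z c : 'I_n) :
  sorted ord_leq (X ++ [:: z]) -> z < c -> plactic (X ++ [:: c; z]) (c :: X ++ [:: z]).
Proof.
elim/last_ind: X z => [|X x IH] z Hs zc; first reflexivity.
move: Hs; rewrite cat_rcons sorted_cat_cons /= andbT -cats1 => /andP [Hs xz].
transitivity (X ++ [:: c; x; z]).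
  by rewrite -catA; apply: plactic_catl; exact: (plactic_knuth1 xz zc).
have := plactic_catr [:: z] (IH x Hs (leq_ltn_trans xz zc)).
by rewrite cat_cons -!catA; apply.
Qed.

Lemma knuth2_row (r : 'I_n) (v : word) (x : 'I_n) :
  sorted ord_leq (r :: v) -> x < r -> plactic (r :: v ++ [:: x]) (r :: x :: v).
Proof.
elim: v r => [|v1 v IH] r /= Hs xr; first reflexivity.
move: Hs => /andP [r_le Hs].
have xv1 : x < v1 by apply: leq_trans r_le.
transitivity (r :: v1 :: x :: v); first exact: plactic_cons (IH v1 Hs xv1).
symmetry; exact: (plactic_ctx [::] v (plactic_knuth2 xr r_le)).
Qed.

(** * Schensted insertion *)

Fixpoint bump (R : word) (x : 'I_n) : option ('I_n * word) :=
  if R is r :: R' then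
    if x < r then Some (r, x :: R')
    else if bump R' x is Some (b, R'') then Some (b, r :: R'') else None
  else None.

Lemma bump_noneE R x : (bump R x == None) = all (fun z : 'I_n => z <= x) R.
Proof.
elim: R => [|r R IH] //=.
case: ltnP => //= _.
by case: (bump R x) IH => [[b R'']|] /= <-.
Qed.

Lemma bumpP R x b R' : bump R x = Some (b, R') ->
  exists u v, [/\ R = u ++ b :: v, R' = u ++ x :: v,
                  all (fun z : 'I_n => z <= x) u & x < b].
Proof.
elim: R b R' => [|r R IH] b R' //=.
case: ltnP => r_le_x; first by case=> <- <-; exists [::], R.
case E: (bump R x) => [[b' R'']|] //; case=> <- <-.
have [u [v [-> -> u_le xb]]] := IH _ _ E.
by exists (r :: u), v; rewrite /= r_le_x u_le.
Qed.

Lemma bump_catl R1 R2 x b R1' :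
  bump R1 x = Some (b, R1') -> bump (R1 ++ R2) x = Some (b, R1' ++ R2).
Proof.
elim: R1 b R1' => [|r R1 IH] b R1' //=.
case: ltnP => _; first by case=> <- <-.
by case: (bump R1 x) IH => [[b' R'']|] // IH [<- <-]; rewrite (IH _ _ erefl).
Qed.

Lemma bump_catr (R1 R2 : word) (x : 'I_n) : all (fun z : 'I_n => z <= x) R1 ->
  bump (R1 ++ R2) x = omap (fun p => (p.1, R1 ++ p.2)) (bump R2 x).
Proof.
elim: R1 => [|r R1 IH] /=; first by case: (bump R2 x) => [[]|].
case/andP => r_le_x R1x; rewrite ltnNge r_le_x /= IH //.
by case: (bump R2 x) => [[]|].
Qed.

Lemma bump_sorted R x b R' : sorted ord_leq R -> bump R x = Some (b, R') -> sorted ord_leq R'.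
Proof.
elim: R b R' => [|r R IH] b R' // Hs /=.
case: ltnP => r_le_x.
  case=> _ <-; case: R Hs {IH} => [|r2 R] //= /andP [r_le_r2 ->].
  by rewrite andbT; apply: leq_trans r_le_r2; apply: ltnW.
case E: (bump R x) => [[b' R'']|] //; case=> _ <-.
move: Hs; rewrite sorted_consE => /andP [r_le Hs].
rewrite sorted_consE (IH _ _ Hs E) andbT.
have [u [v [E1 E2 _ _]]] := bumpP E.
by move: r_le; rewrite E1 E2 !all_cat /= => /and3P [-> _ ->]; rewrite andbT.
Qed.

Lemma sorted_rcons_max (R : word) (x : 'I_n) :
  sorted ord_leq R -> all (fun z : 'I_n => z <= x) R -> sorted ord_leq (rcons R x).
Proof.
elim: R => [|r R IH] //= Hs /andP [r_le_x R_le_x].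
move: Hs; rewrite -/(sorted _ (r :: R)) -/(sorted _ (r :: rcons R x)) !sorted_consE.
by case/andP=> r_le Hs; rewrite (IH Hs R_le_x) all_rcons r_le !andbT.
Qed.

Lemma bump_plactic R x b R' : sorted ord_leq R -> bump R x = Some (b, R') ->
  plactic (R ++ [:: x]) (b :: R').
Proof.
elim: R b R' => [|r R IH] b R' // Hs /=.
case: ltnP => r_le_x; first by case=> <- <-; exact: knuth2_row.
case E: (bump R x) => [[b' R'']|] //; case=> <- <-.
move: Hs; rewrite sorted_consE => /andP [/allP r_le Hs].
transitivity (r :: b' :: R''); first exact: plactic_cons (IH _ _ Hs E).
have [u [v [E1 E2 u_le xb']]] := bumpP E.
have [h [t [-> r_le_h h_lt_b']]] : exists h t, [/\ R'' = h :: t, r <= h & h < b'].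
  case: u E1 E2 u_le => [|u1 u] E1 -> /=; first by exists x, v.
  case/andP=> u1_le _; exists u1, (u ++ x :: v); split => //.
    by apply: r_le; rewrite E1 mem_head.
  exact: leq_ltn_trans u1_le xb'.
exact: (plactic_ctx [::] t (plactic_knuth1 r_le_h h_lt_b')).
Qed.

Fixpoint insert (T : seq word) (x : 'I_n) : seq word :=
  if T is R :: T' then
    if bump R x is Some (b, R') then R' :: insert T' b else rcons R x :: T'
  else [:: [:: x]].

Lemma insert_bump_none R T x : bump R x = None -> insert (R :: T) x = rcons R x :: T.
Proof. by move=> /= ->. Qed.

(* A tableau is the list of its rows, first row first; the reading word lists the rows from
   the last one up. *)
Definition reading (T : seq word) : word := flatten (rev T).

Lemma reading_cons R T : reading (R :: T) = reading T ++ R.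
Proof. by rewrite /reading rev_cons -cats1 flatten_cat /= cats0. Qed.

Lemma insert_spec T x : all (sorted ord_leq) T ->
  all (sorted ord_leq) (insert T x) /\ plactic (reading T ++ [:: x]) (reading (insert T x)).
Proof.
elim: T x => [|R T IH] x /=; first by split => //; reflexivity.
case/andP=> HR HT; case E: (bump R x) => [[b R']|].
  have [insT_sorted insT_pl] := IH b HT.
  rewrite /= (bump_sorted HR E) insT_sorted; split => //.
  rewrite !reading_cons -catA.
  transitivity (reading T ++ b :: R'); first exact: plactic_catl (bump_plactic HR E).
  by rewrite -cat1s catA; apply: plactic_catr.
move/eqP: E; rewrite bump_noneE => R_le_x.
rewrite /= sorted_rcons_max // HT; split => //.
by rewrite !reading_cons -catA cats1; reflexivity.
Qed.

Definition ptab (w : word) : seq word := foldl insert [::] w.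

Lemma ptab_spec w : all (sorted ord_leq) (ptab w) /\ plactic w (reading (ptab w)).
Proof.
elim/last_ind: w => [|w x [ptab_sorted ptab_pl]]; first by split => //; reflexivity.
rewrite /ptab foldl_rcons -/(ptab w).
have [insert_sorted insert_pl] := insert_spec x ptab_sorted; split => //.
rewrite -cats1; transitivity (reading (ptab w) ++ [:: x]) => //.
exact: plactic_catr.
Qed.

Lemma plactic_of_ptab_eq w1 w2 : ptab w1 = ptab w2 -> plactic w1 w2.
Proof.
move=> E; have [_ H1] := ptab_spec w1; have [_ H2] := ptab_spec w2.
by transitivity (reading (ptab w1)) => //; rewrite E; symmetry.
Qed.

Lemma insert_gap_lt (y x : 'I_n) (R1 R2 : word) (Tr : seq word) : x < y -> y \in R1 ->
  all (fun z : 'I_n => z <= y) R1 ->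
  exists R1' Tr', [/\ insert ((R1 ++ R2) :: Tr) x = (R1' ++ R2) :: Tr',
    insert ((R1 ++ y :: R2) :: Tr) x = (R1' ++ y :: R2) :: Tr',
    all (fun z : 'I_n => z <= y) R1' & count_mem y R1 <= (count_mem y R1').+1].
Proof.
move=> xy yR1 R1y.
case E: (bump R1 x) => [[b R1']|]; last first.
  by move/eqP: E; rewrite bump_noneE => /allP /(_ y yR1); rewrite leqNgt xy.
exists R1', (insert Tr b); rewrite /= !(bump_catl _ E); split => //.
  have [u [v [E1 -> _ _]]] := bumpP E.
  by move: R1y; rewrite E1 !all_cat /= (ltnW xy) => /and3P [-> _ ->].
have [u [v [-> -> _ _]]] := bumpP E.
by rewrite !count_cat /=; case: (b == y); lia.
Qed.

Lemma insert_gap_gt (y x : 'I_n) (R1 R2 : word) (Tr : seq word) : y < x ->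
  all (fun z : 'I_n => z <= y) R1 -> all (fun z : 'I_n => y < z) R2 ->
  exists R2' Tr', [/\ insert ((R1 ++ R2) :: Tr) x = (R1 ++ R2') :: Tr',
    insert ((R1 ++ y :: R2) :: Tr) x = (R1 ++ y :: R2') :: Tr',
    all (fun z : 'I_n => y < z) R2' & size R2' <= (size R2).+1].
Proof.
move=> yx R1y R2y.
have R1x : all (fun z : 'I_n => z <= x) R1.
  by apply/allP=> z /(allP R1y) zy; apply: leq_trans zy (ltnW yx).
have R1yx : all (fun z : 'I_n => z <= x) (rcons R1 y) by rewrite all_rcons R1x ltnW.
rewrite /= bump_catr //.
have -> : bump (R1 ++ y :: R2) x = omap (fun p => (p.1, R1 ++ y :: p.2)) (bump R2 x).
  by rewrite -cat_rcons bump_catr //; case: (bump R2 x) => [[b R2']|] //=; rewrite cat_rcons.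
case E: (bump R2 x) => [[b R2']|] /=.
  have [u [v [E1 E2 _ _]]] := bumpP E.
  exists R2', (insert Tr b); split => //.
    by move: R2y; rewrite E1 E2 !all_cat /= yx => /and3P [-> _ ->].
  by rewrite E1 E2 !size_cat.
exists (rcons R2 x), Tr; rewrite !rcons_cat all_rcons yx R2y size_rcons.
by split.
Qed.

Lemma insert_gap_eq (y : 'I_n) (R1 R2 : word) (Tr : seq word) :
  all (fun z : 'I_n => z <= y) R1 -> all (fun z : 'I_n => y < z) R2 ->
  exists Tr', insert ((R1 ++ R2) :: Tr) y = (rcons R1 y ++ behead R2) :: Tr' /\
              insert ((R1 ++ y :: R2) :: Tr) y = (rcons R1 y ++ y :: behead R2) :: Tr'.
Proof.
move=> R1y R2y.
have R1yy : all (fun z : 'I_n => z <= y) (rcons R1 y) by rewrite all_rcons leqnn.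
rewrite -cat_rcons /= !bump_catr //.
case: R2 R2y => [|r R2] /=; first by exists Tr; rewrite cats0 cats0 cats1.
by case/andP=> -> _; exists (insert Tr r); rewrite cat_rcons.
Qed.

Lemma foldl_insert_cons (T : seq word) x w :
  foldl insert T (x :: w) = foldl insert (insert T x) w.
Proof. by []. Qed.

Lemma foldl_insert_gap (y : 'I_n) (q R1 R2 : word) (Tr : seq word) :
  all (fun z : 'I_n => z <= y) R1 -> all (fun z : 'I_n => y < z) R2 ->
  count (fun z : 'I_n => z < y) q <= count_mem y R1 ->
  exists R1' R2' Tr',
    [/\ foldl insert ((R1 ++ R2) :: Tr) q = (R1' ++ R2') :: Tr',
        foldl insert ((R1 ++ y :: R2) :: Tr) q = (R1' ++ y :: R2') :: Tr',
        all (fun z : 'I_n => z <= y) R1', all (fun z : 'I_n => y < z) R2' &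
        size R2' <= size R2 + count (fun z : 'I_n => y < z) q].
Proof.
elim: q R1 R2 Tr => [|x q IH] R1 R2 Tr R1y R2y cnt.
  by exists R1, R2, Tr; rewrite addn0.
rewrite /= in cnt; rewrite !foldl_insert_cons [count _ (_ :: _)]/=.
case: (ltngtP x y) cnt => [xy | yx | /val_inj xy]; rewrite ?add1n ?add0n => cnt.
- have yR1 : y \in R1 by apply: contraLR cnt => /count_memPn ->.
  have [R1' [Tr' [-> -> R1'y cnt']]] := insert_gap_lt R2 Tr xy yR1 R1y.
  have [|R1'' [R2' [Tr'' [-> -> ? ? ?]]]] := IH R1' R2 Tr' R1'y R2y.
    by rewrite -ltnS; apply: leq_trans cnt'.
  by exists R1'', R2', Tr''; split => //; lia.
- have [R2' [Tr' [-> -> R2'y size_R2']]] := insert_gap_gt Tr yx R1y R2y.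
  have [R1' [R2'' [Tr'' [-> -> ? ? ?]]]] := IH R1 R2' Tr' R1y R2'y cnt.
  by exists R1', R2'', Tr''; split => //; lia.
- subst x; have [Tr' [-> ->]] := insert_gap_eq Tr R1y R2y.
  have R1y' : all (fun z : 'I_n => z <= y) (rcons R1 y) by rewrite all_rcons leqnn.
  have R2y' : all (fun z : 'I_n => y < z) (behead R2) by case: R2 R2y => //= ? ? /andP [].
  have [|R1' [R2' [Tr'' [-> -> ? ? size_R2']]]] := IH (rcons R1 y) (behead R2) Tr' R1y' R2y'.
    by rewrite -cats1 count_cat /= eqxx addn1; apply: leqW.
  by exists R1', R2', Tr''; split => //; rewrite size_behead in size_R2'; lia.
Qed.

Lemma foldl_insert_gap_nseq (y : 'I_n) k (R1 R2 : word) (Tr : seq word) :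
  all (fun z : 'I_n => z <= y) R1 -> all (fun z : 'I_n => y < z) R2 -> size R2 <= k ->
  exists R1' Tr',
    [/\ foldl insert ((R1 ++ R2) :: Tr) (nseq k y) = R1' :: Tr',
        foldl insert ((R1 ++ y :: R2) :: Tr) (nseq k y) = rcons R1' y :: Tr' &
        all (fun z : 'I_n => z <= y) R1'].
Proof.
elim: k R1 R2 Tr => [|k IH] R1 R2 Tr R1y R2y.
  by case: R2 R2y => // _ _; exists R1, Tr; rewrite cats0 cats1.
move=> size_R2; rewrite !foldl_insert_cons; have [Tr' [-> ->]] := insert_gap_eq Tr R1y R2y.
have R1y' : all (fun z : 'I_n => z <= y) (rcons R1 y) by rewrite all_rcons leqnn.
have R2y' : all (fun z : 'I_n => y < z) (behead R2) by case: R2 R2y {size_R2} => //= ? ? /andP [].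
by apply: IH R1y' R2y' _; rewrite size_behead; lia.
Qed.

Lemma ptab_nseq (y : 'I_n) N : 0 < N -> ptab (nseq N y) = [:: nseq N y].
Proof.
elim: N => [|[|N] IH] // _.
have /eqP y_max : bump (nseq N.+1 y) y == None by rewrite bump_noneE all_nseq leqnn orbT.
by rewrite -rcons_nseq /ptab foldl_rcons -/(ptab _) IH // insert_bump_none.
Qed.

(* Both sides have the same P-tableau: after y^N q the two tableaux differ only by one more y
   in the first row, between the letters <= y and those > y, and the final y's close the gap. *)
Lemma plactic_transfer (y : 'I_n) (q : word) N M :
  0 < N -> count (fun z : 'I_n => z < y) q <= N -> count (fun z : 'I_n => y < z) q < M ->
  plactic (nseq N y ++ q ++ nseq M y) (nseq N.+1 y ++ q ++ nseq M.-1 y).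
Proof.
case: M => [|M] // N_gt0 low_q high_q; apply: plactic_of_ptab_eq.
rewrite /ptab !foldl_cat -!/(ptab _) !ptab_nseq // -{1}rcons_nseq foldl_rcons.
have R1y : all (fun z : 'I_n => z <= y) (nseq N y) by rewrite all_nseq leqnn orbT.
have cnt : count (fun z : 'I_n => z < y) q <= count_mem y (nseq N y).
  by rewrite count_nseq /= eqxx mul1n.
rewrite -[nseq N y]cats0 -rcons_nseq -cats1.
have [R1 [R2 [Tr [-> -> R1y' R2y size_R2]]]] := @foldl_insert_gap y q _ [::] [::] R1y isT cnt.
have [|R1' [Tr' [-> -> R1'y]]] := foldl_insert_gap_nseq (k := M) Tr R1y' R2y.
  by rewrite /= in size_R2; lia.
by rewrite insert_bump_none //; apply/eqP; rewrite bump_noneE.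
Qed.

(** * Blocks in the plactic monoid *)

Lemma sorted_nseq_cat (a b : 'I_n) i m : a <= b -> sorted ord_leq (nseq i a ++ nseq m b).
Proof.
move=> ab; elim: i => [|i IH] /=.
  by elim: m => [|[|m] IH] //=; rewrite /ord_leq leqnn.
rewrite -/(sorted _ (a :: _)) sorted_consE IH andbT.
by rewrite all_cat !all_nseq /ord_leq leqnn ab !orbT.
Qed.

Lemma plactic_interleave (b c : 'I_n) j : b < c ->
  plactic (nseq j c ++ nseq j b) (flatten (nseq j [:: c; b])).
Proof.
move=> bc; elim: j => [|j IH]; first reflexivity.
rewrite -(rcons_nseq j [:: c; b]) flatten_rcons.
transitivity (nseq j c ++ nseq j b ++ [:: c; b]); last by rewrite catA; exact: plactic_catr.
rewrite -rcons_nseq -cats1 -catA; apply: plactic_catl; symmetry.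
rewrite -rcons_nseq -cats1 /=; apply: knuth1_row bc.
by rewrite cats1 rcons_nseq; exact: (sorted_nseq_cat 0 j.+1 (leqnn b)).
Qed.

Lemma plactic_interleave_knuth1 (a b c : 'I_n) i j k : a <= b -> b < c ->
  plactic (nseq i a ++ nseq k b ++ flatten (nseq j [:: c; b]))
          (nseq j c ++ nseq i a ++ nseq (k + j) b).
Proof.
move=> ab bc; elim: j k => [|j IH] k; first by rewrite cats0 addn0; reflexivity.
have row : sorted ord_leq ((nseq i a ++ nseq k b) ++ [:: b]).
  by rewrite -catA cats1 rcons_nseq sorted_nseq_cat.
set F := flatten (nseq j [:: c; b]).
transitivity (c :: nseq i a ++ nseq k.+1 b ++ F).
  have -> : nseq i a ++ nseq k b ++ flatten (nseq j.+1 [:: c; b]) =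
            ((nseq i a ++ nseq k b) ++ [:: c; b]) ++ F by rewrite -!catA.
  have -> : c :: nseq i a ++ nseq k.+1 b ++ F = (c :: (nseq i a ++ nseq k b) ++ [:: b]) ++ F.
    by rewrite -rcons_nseq -cats1 cat_cons -!catA.
  exact: plactic_catr (knuth1_row row bc).
by rewrite addnS -addSn; apply: plactic_cons.
Qed.

Lemma plactic_blocks_knuth1 (a b c : 'I_n) i j l : a <= b -> b < c -> j <= l ->
  plactic (nseq i a ++ nseq j c ++ nseq l b) (nseq j c ++ nseq i a ++ nseq l b).
Proof.
move=> ab bc jl; rewrite -(subnKC jl) !nseqD.
transitivity (nseq i a ++ flatten (nseq j [:: c; b]) ++ nseq (l - j) b).
  by apply: plactic_catl; rewrite catA; apply: plactic_catr; exact: plactic_interleave.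
rewrite !catA; apply: plactic_catr; rewrite -!catA.
exact: (plactic_interleave_knuth1 i j 0 ab bc).
Qed.

Definition rev_compl (w : word) : word := rev (map (@rev_ord n) w).

Lemma rev_compl_cat x y : rev_compl (x ++ y) = rev_compl y ++ rev_compl x.
Proof. by rewrite /rev_compl map_cat rev_cat. Qed.

Lemma rev_complK : involutive rev_compl.
Proof.
by move=> w; rewrite /rev_compl map_rev revK -map_comp map_id_in // => z _ /=; rewrite rev_ordK.
Qed.

Lemma rev_compl_nseq k x : rev_compl (nseq k x) = nseq k (rev_ord x).
Proof. by rewrite /rev_compl map_nseq rev_nseq. Qed.

Lemma rev_ord_ltE (x y : 'I_n) : (rev_ord x < rev_ord y) = (y < x).
Proof. by rewrite /=; have := ltn_ord x; have := ltn_ord y; lia. Qed.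

Lemma rev_ord_leE (x y : 'I_n) : (rev_ord x <= rev_ord y) = (y <= x).
Proof. by rewrite /=; have := ltn_ord x; have := ltn_ord y; lia. Qed.

Lemma knuth_step_rev_compl x y : knuth_step x y -> knuth_step (rev_compl x) (rev_compl y).
Proof.
case=> u v a b c H1 H2; rewrite !rev_compl_cat.
- have := @knuth2 n (rev_compl v) (rev_compl u) (rev_ord c) (rev_ord b) (rev_ord a).
  by rewrite rev_ord_ltE rev_ord_leE => /(_ H2 H1); rewrite -!catA /rev_compl.
- have := @knuth1 n (rev_compl v) (rev_compl u) (rev_ord c) (rev_ord b) (rev_ord a).
  by rewrite rev_ord_ltE rev_ord_leE => /(_ H2 H1); rewrite -!catA /rev_compl.
Qed.

Lemma plactic_rev_compl x y : plactic x y -> plactic (rev_compl x) (rev_compl y).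
Proof. by apply: rst_homo => x1 y1 /knuth_step_rev_compl; apply: rst_step. Qed.

Lemma plactic_blocks_knuth2 (a b c : 'I_n) i j l : a < b -> b <= c -> j <= i ->
  plactic (nseq i b ++ nseq j a ++ nseq l c) (nseq i b ++ nseq l c ++ nseq j a).
Proof.
move=> ab bc ji.
rewrite -(rev_complK (nseq i b ++ _)) -(rev_complK (nseq i b ++ nseq l c ++ _)).
apply: plactic_rev_compl; rewrite !rev_compl_cat !rev_compl_nseq -!catA.
by apply: plactic_blocks_knuth1; rewrite ?rev_ord_leE ?rev_ord_ltE.
Qed.

(** * The quotient Plax(A, sigma) *)

Section Power.
Variable sigma : 'I_n -> nat.
Hypothesis sigma_ge2 : forall a, 2 <= sigma a.
Local Notation plax := (plax_sigma_cong sigma).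

Definition period (a : 'I_n) := (sigma a).-1.

Lemma period_gt0 a : 0 < period a.
Proof. by rewrite /period; have := sigma_ge2 a; case: (sigma a) => [|[]]. Qed.

Lemma pow_step_ctx (p q x y : word) :
  pow_step sigma x y -> pow_step sigma (p ++ x ++ q) (p ++ y ++ q).
Proof. by case=> u v a; have := powstep sigma (p ++ u) (v ++ q) a; rewrite -!catA. Qed.

Lemma plax_step_ctx (p q x y : word) :
  knuth_step x y \/ pow_step sigma x y ->
  knuth_step (p ++ x ++ q) (p ++ y ++ q) \/ pow_step sigma (p ++ x ++ q) (p ++ y ++ q).
Proof. by case=> [/knuth_step_ctx | /pow_step_ctx]; [left | right]. Qed.

Lemma plax_catl p x y : plax x y -> plax (p ++ x) (p ++ y).
Proof. exact: (rst_catl plax_step_ctx p). Qed.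

Lemma plax_catr q x y : plax x y -> plax (x ++ q) (y ++ q).
Proof. exact: (rst_catr plax_step_ctx q). Qed.

Lemma plax_cat x x' y y' : plax x x' -> plax y y' -> plax (x ++ y) (x' ++ y').
Proof. exact: (rst_cat plax_step_ctx). Qed.

Lemma plax_of_plactic x y : plactic x y -> plax x y.
Proof. by apply: rst_sub => ? ? ?; left. Qed.

Lemma plax_pow1 (y : 'I_n) e : plax (nseq (e.+1 + period y) y) (nseq e.+1 y).
Proof.
have -> : e.+1 + period y = e + sigma y.
  by rewrite /period; have := sigma_ge2 y; case: (sigma y) => // s _; rewrite addSnnS.
rewrite nseqD -rcons_nseq -cats1; apply: rst_step; right.
by have := powstep sigma (nseq e y) [::] y; rewrite !cats0.
Qed.

Lemma plax_pow (y : 'I_n) e m : plax (nseq (e.+1 + m * period y) y) (nseq e.+1 y).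
Proof.
elim: m => [|m IH]; first by rewrite addn0; reflexivity.
transitivity (nseq (e + m * period y).+1 y); last by rewrite -addSn.
have -> : e.+1 + m.+1 * period y = (e + m * period y).+1 + period y by rewrite mulSn; lia.
exact: plax_pow1.
Qed.

Lemma plax_transfer (y : 'I_n) (p q r : word) a b :
  plax (p ++ nseq a.+1 y ++ q ++ nseq b.+2 y ++ r) (p ++ nseq a.+2 y ++ q ++ nseq b.+1 y ++ r).
Proof.
(* A multiple of the period that is at least size q. *)
set D := size q * period y.
have size_q : size q <= D by rewrite /D; have := period_gt0 y; nia.
have pump k : plax (nseq (k.+1 + D) y) (nseq k.+1 y) by apply: plax_pow.
transitivity (p ++ nseq (a.+1 + D) y ++ q ++ nseq (b.+2 + D) y ++ r).
  by apply: plax_catl; apply: plax_cat; [|apply: plax_catl; apply: plax_catr]; symmetry.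
transitivity (p ++ nseq (a.+2 + D) y ++ q ++ nseq (b.+1 + D) y ++ r); last first.
  by apply: plax_catl; apply: plax_cat; [|apply: plax_catl; apply: plax_catr].
apply: plax_catl; rewrite !catA; apply: plax_catr; rewrite -!catA; apply: plax_of_plactic.
have := @plactic_transfer y q (a.+1 + D) (b.+2 + D); rewrite addSn; apply => //.
- by apply: leq_trans (count_size _ _) _; lia.
- by apply: leq_ltn_trans (count_size _ _) _; lia.
Qed.

Lemma plax_blocks_knuth1 (a b c : 'I_n) i j l : a <= b -> b < c ->
  plax (nseq i a ++ nseq j c ++ nseq l.+1 b) (nseq j c ++ nseq i a ++ nseq l.+1 b).
Proof.
move=> ab bc; have pump := plax_pow b l j.
transitivity (nseq i a ++ nseq j c ++ nseq (l.+1 + j * period b) b).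
  by do 2 apply: plax_catl; symmetry.
transitivity (nseq j c ++ nseq i a ++ nseq (l.+1 + j * period b) b).
  by apply/plax_of_plactic/plactic_blocks_knuth1 => //; have := period_gt0 b; nia.
by do 2 apply: plax_catl.
Qed.

Lemma plax_blocks_knuth2 (a b c : 'I_n) i j l : a < b -> b <= c ->
  plax (nseq i.+1 b ++ nseq j a ++ nseq l c) (nseq i.+1 b ++ nseq l c ++ nseq j a).
Proof.
move=> ab bc; have pump := plax_pow b i j.
transitivity (nseq (i.+1 + j * period b) b ++ nseq j a ++ nseq l c).
  by apply: plax_catr; symmetry.
transitivity (nseq (i.+1 + j * period b) b ++ nseq l c ++ nseq j a).
  by apply/plax_of_plactic/plactic_blocks_knuth2 => //; have := period_gt0 b; nia.
exact: plax_catr.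
Qed.

(* The pair (x, e) stands for the block x^(e+1); e is its surplus exponent. *)
Definition expand (s : seq ('I_n * nat)) : word := flatten [seq nseq p.2.+1 p.1 | p <- s].
Definition skeleton (s : seq ('I_n * nat)) : word := map fst s.

Lemma expand_cat s1 s2 : expand (s1 ++ s2) = expand s1 ++ expand s2.
Proof. by rewrite /expand map_cat flatten_cat. Qed.

Lemma expand_nil : expand [::] = [::].
Proof. by []. Qed.

Lemma expand_cons x e s : expand ((x, e) :: s) = nseq e.+1 x ++ expand s.
Proof. by []. Qed.

Definition lifts_to (X Y : word) :=
  forall s, skeleton s = X -> exists2 s', skeleton s' = Y & plax (expand s) (expand s').

Lemma lifts_to_refl X : lifts_to X X.
Proof. by move=> s <-; exists s => //; reflexivity. Qed.

Lemma lifts_to_trans X Y Z : lifts_to X Y -> lifts_to Y Z -> lifts_to X Z.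
Proof.
move=> XY YZ s /XY [s1 /YZ [s2 s2Z ex12] ex1].
by exists s2 => //; transitivity (expand s1).
Qed.

Lemma lifts_to_ctx p q X Y : lifts_to X Y -> lifts_to (p ++ X ++ q) (p ++ Y ++ q).
Proof.
move=> XY s sk_s.
have sk_take k t : skeleton (take k t) = take k (skeleton t) by rewrite /skeleton map_take.
have sk_drop k t : skeleton (drop k t) = drop k (skeleton t) by rewrite /skeleton map_drop.
rewrite -(cat_take_drop (size p) s) -(cat_take_drop (size X) (drop (size p) s)).
have /XY [s' sk_s' ex_s'] : skeleton (take (size X) (drop (size p) s)) = X.
  by rewrite sk_take sk_drop sk_s drop_size_cat // take_size_cat.
exists (take (size p) s ++ s' ++ drop (size X) (drop (size p) s)).
  rewrite /skeleton !map_cat -!/(skeleton _) sk_s' sk_take !sk_drop sk_s.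
  by rewrite take_size_cat // !drop_size_cat.
by rewrite !expand_cat; apply: plax_catl; apply: plax_catr.
Qed.

Lemma lifts_to_knuth1 (a b c : 'I_n) : a <= b -> b < c ->
  lifts_to [:: a; c; b] [:: c; a; b] /\ lifts_to [:: c; a; b] [:: a; c; b].
Proof.
move=> ab bc; split; case=> [|[x1 i] [|[x2 j] [|[x3 l] []]]] //= [-> -> ->].
- exists [:: (c, j); (a, i); (b, l)] => //; rewrite !expand_cons expand_nil !cats0.
  exact: (plax_blocks_knuth1 i.+1 j.+1 l ab bc).
- exists [:: (a, j); (c, i); (b, l)] => //; rewrite !expand_cons expand_nil !cats0.
  by symmetry; exact: (plax_blocks_knuth1 j.+1 i.+1 l ab bc).
Qed.

Lemma lifts_to_knuth2 (a b c : 'I_n) : a < b -> b <= c ->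
  lifts_to [:: b; a; c] [:: b; c; a] /\ lifts_to [:: b; c; a] [:: b; a; c].
Proof.
move=> ab bc; split; case=> [|[x1 i] [|[x2 j] [|[x3 l] []]]] //= [-> -> ->].
- exists [:: (b, i); (c, l); (a, j)] => //; rewrite !expand_cons expand_nil !cats0.
  exact: (plax_blocks_knuth2 i j.+1 l.+1 ab bc).
- exists [:: (b, i); (a, l); (c, j)] => //; rewrite !expand_cons expand_nil !cats0.
  by symmetry; exact: (plax_blocks_knuth2 i l.+1 j.+1 ab bc).
Qed.

Lemma lifts_to_idem (a : 'I_n) : lifts_to [:: a; a] [:: a] /\ lifts_to [:: a] [:: a; a].
Proof.
split.
- case=> [|[x1 i] [|[x2 j] []]] //= [-> ->].
  exists [:: (a, i + j.+1)] => //.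
  by rewrite !expand_cons expand_nil !cats0 -nseqD addSn; reflexivity.
- case=> [|[x1 [|e]] []] //= [->].
    exists [:: (a, 0); (a, (period a).-1)] => //; rewrite !expand_cons expand_nil !cats0.
    by rewrite -addn1 -nseqD prednK ?period_gt0 // addnC; symmetry; apply: plax_pow1.
  by exists [:: (a, 0); (a, e)] => //; rewrite !expand_cons expand_nil !cats0; reflexivity.
Qed.

Lemma plax2_lifts_to u v : plax_sigma_cong (fun _ => 2) u v -> lifts_to u v /\ lifts_to v u.
Proof.
elim=> [x y [[p q a b c ab bc | p q a b c ab bc] | [p q a]] | x | x y _ []
         | x y z _ [xy yx] _ [yz zy]].
- by have [] := lifts_to_knuth1 ab bc; split; apply: lifts_to_ctx.
- by have [] := lifts_to_knuth2 ab bc; split; apply: lifts_to_ctx.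
- by have [] := lifts_to_idem a; split; apply: lifts_to_ctx.
- by split; apply: lifts_to_refl.
- by [].
- by split; [apply: lifts_to_trans xy yz | apply: lifts_to_trans zy yx].
Qed.

(* ev_sigma w is determined by these exponents, as x^(k+1) = x^(k+1+period x) in Com(A, sigma). *)
Definition com_exp (x : 'I_n) (w : word) : nat :=
  if count_mem x w is k.+1 then (k %% period x).+1 else 0.

Lemma count_knuth_step x (u v : word) : knuth_step u v -> count_mem x u = count_mem x v.
Proof. by case=> p q a b c _ _; rewrite !count_cat /=; lia. Qed.

Lemma count_comm_step x (u v : word) : comm_step u v -> count_mem x u = count_mem x v.
Proof. by case=> p q a b; rewrite !count_cat /=; lia. Qed.

Lemma com_exp_pow_step x (u v : word) : pow_step sigma u v -> com_exp x u = com_exp x v.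
Proof.
case=> p q a; rewrite /com_exp !count_cat count_nseq /=.
case: eqP => [<-|_]; last by rewrite !mul0n.
have -> : sigma a = (period a).+1 by rewrite /period prednK // ltnW.
set C := count_mem a p + count_mem a q.
have -> : count_mem a p + (true * (period a).+1 + count_mem a q) = (C + period a).+1 by lia.
have -> : count_mem a p + (true + 0 + count_mem a q) = C.+1 by lia.
by rewrite modnDr.
Qed.

Lemma com_exp_plax x u v : plax u v -> com_exp x u = com_exp x v.
Proof.
apply: rst_invariant => {}u {}v [/(count_knuth_step x) | /com_exp_pow_step //].
by rewrite /com_exp => ->.
Qed.

Lemma com_exp_com x u v : com_sigma_cong sigma u v -> com_exp x u = com_exp x v.
Proof.
apply: rst_invariant => {}u {}v [/(count_comm_step x) | /com_exp_pow_step //].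
by rewrite /com_exp => ->.
Qed.

Definition surplus (x : 'I_n) (s : seq ('I_n * nat)) : nat := \sum_(p <- s | p.1 == x) p.2.

Lemma surplus_nil x : surplus x [::] = 0.
Proof. exact: big_nil. Qed.

Lemma surplus_cons x y e s : surplus x ((y, e) :: s) = (y == x) * e + surplus x s.
Proof. by rewrite /surplus big_cons /=; case: eqP; rewrite ?mul1n. Qed.

Lemma surplus_cat x s1 s2 : surplus x (s1 ++ s2) = surplus x s1 + surplus x s2.
Proof. exact: big_cat. Qed.

Lemma count_expand x s : count_mem x (expand s) = count_mem x (skeleton s) + surplus x s.
Proof.
elim: s => [|[y e] s IH]; first by rewrite surplus_nil.
by rewrite expand_cons count_cat IH count_nseq surplus_cons /=; case: (y == x); lia.
Qed.

Lemma expand_skeleton s : all (fun p => p.2 == 0) s -> expand s = skeleton s.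
Proof. by elim: s => [|[y e] s IH] //= /andP [/eqP -> /IH <-]. Qed.

Lemma surplus_ge x e s : (x, e) \in s -> e <= surplus x s.
Proof.
elim: s => [|[y e'] s IH] //; rewrite in_cons surplus_cons.
by case/predU1P=> [[-> ->] | /IH]; rewrite ?eqxx; lia.
Qed.

Lemma surplus_split x s : 0 < surplus x s ->
  exists s1 s2 e, s = s1 ++ (x, e.+1) :: s2 /\ surplus x s1 = 0.
Proof.
elim: s => [|[y e] s IH]; first by rewrite surplus_nil.
rewrite surplus_cons; case: (eqVneq y x) => [->|yx] /=.
  case: e => [|e]; last by exists [::], s, e; rewrite surplus_nil.
  move=> /IH [s1 [s2 [e' [-> s1x]]]]; exists ((x, 0) :: s1), s2, e'.
  by rewrite surplus_cons s1x muln0.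
move=> /IH [s1 [s2 [e' [-> s1x]]]]; exists ((y, e) :: s1), s2, e'.
by rewrite surplus_cons s1x (negbTE yx).
Qed.

Lemma surplus_mod y s : y \in skeleton s ->
  com_exp y (expand s) = com_exp y (skeleton s) -> surplus y s %% period y = 0.
Proof.
rewrite /com_exp count_expand -has_pred1 has_count.
case: (count_mem y (skeleton s)) => // C _ [/eqP].
by rewrite -{2}(addn0 C) eqn_modDl mod0n => /eqP.
Qed.

Lemma expand_transfer s1 s2 s3 (y : 'I_n) a b :
  plax (expand (s1 ++ (y, a) :: s2 ++ (y, b) :: s3))
       (expand (s1 ++ (y, a + b) :: s2 ++ (y, 0) :: s3)).
Proof.
elim: b a => [|b IH] a; first by rewrite addn0; reflexivity.
transitivity (expand (s1 ++ (y, a.+1) :: s2 ++ (y, b) :: s3)); last by rewrite addnS -addSn.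
by rewrite !(expand_cat, expand_cons); apply: plax_transfer.
Qed.

(* Pumping a surplus down lowers the total surplus; merging two surpluses lowers the number of
   nonzero ones. *)
Definition weight (s : seq ('I_n * nat)) : nat :=
  \sum_(p <- s) p.2 + count (fun p => p.2 != 0) s.

Lemma weight_split s1 s2 y e :
  weight (s1 ++ (y, e) :: s2) = weight s1 + (e + (e != 0)) + weight s2.
Proof. by rewrite /weight big_cat big_cons count_cat /=; lia. Qed.

Lemma expand_lighter s : has (fun p => p.2 != 0) s ->
  (forall x, com_exp x (expand s) = com_exp x (skeleton s)) ->
  exists s', [/\ skeleton s' = skeleton s, plax (expand s) (expand s') & weight s' < weight s].
Proof.
case/hasP=> [[y e0] /surplus_ge e0_le /= e0_gt0].
have [|s1 [s2 [e [-> s1y]]]] := surplus_split (x := y) (s := s).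
  by apply: leq_trans e0_le; rewrite lt0n.
move=> ev_s.
have sk_split t1 t2 e' : skeleton (t1 ++ (y, e') :: t2) = skeleton t1 ++ y :: skeleton t2.
  by rewrite /skeleton map_cat.
have [p_le_e | e_lt_p] := leqP (period y) e.+1.
  exists (s1 ++ (y, e.+1 - period y) :: s2); split.
  - by rewrite !sk_split.
  - rewrite !(expand_cat, expand_cons); apply: plax_catl; apply: plax_catr.
    have -> : e.+2 = (e.+1 - period y).+1 + period y by lia.
    exact: plax_pow1.
  - by rewrite !weight_split; have := period_gt0 y; lia.
(* The total surplus of y is a multiple of its period, so it is not all in this block. *)
have /surplus_split [t1 [t2 [f [s2_eq _]]]] : 0 < surplus y s2.
  have y_in : y \in skeleton (s1 ++ (y, e.+1) :: s2) by rewrite sk_split mem_cat mem_head orbT.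
  have := surplus_mod y_in (ev_s y).
  rewrite surplus_cat surplus_cons eqxx s1y mul1n add0n.
  by case: (surplus y s2) => [|m] //; rewrite addn0 modn_small => // /(_ isT).
exists (s1 ++ (y, e.+1 + f.+1) :: t1 ++ (y, 0) :: t2); split.
- by rewrite s2_eq !sk_split.
- by rewrite s2_eq; apply: expand_transfer.
- by rewrite s2_eq !weight_split; lia.
Qed.

Lemma plax_expand_skeleton s :
  (forall x, com_exp x (expand s) = com_exp x (skeleton s)) -> plax (expand s) (skeleton s).
Proof.
have [k] := ubnP (weight s); elim: k s => // k IH s lt_sk ev_s.
have [/expand_skeleton ->|] := boolP (all (fun p => p.2 == 0) s); first reflexivity.
rewrite -has_predC => /expand_lighter /(_ ev_s) [s' [sk_s' ex_s' lt_s']].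
rewrite -sk_s'; transitivity (expand s') => //; apply: IH => [|x].
  exact: leq_trans lt_s' lt_sk.
by rewrite sk_s' -ev_s; symmetry; apply: com_exp_plax.
Qed.

End Power.

End Plactic.

Theorem mainTheorem1 (n : nat) (sigma : 'I_n -> nat) :
  (forall a, 2 <= sigma a) ->
  forall u v : seq 'I_n,
    plax_sigma_cong (fun _ => 2) u v ->
    com_sigma_cong sigma u v ->
    plax_sigma_cong sigma u v.
Proof.
move=> sigma_ge2 u v /(plax2_lifts_to sigma_ge2) [lift_uv _] com_uv.
set u0 := [seq (x, 0) | x <- u].
have sk_u0 : skeleton u0 = u by rewrite /skeleton -map_comp map_id.
have ex_u0 : expand u0 = u by rewrite expand_skeleton ?sk_u0 // all_map; apply/allP.
have [s sk_s ex_s] := lift_uv u0 sk_u0; rewrite ex_u0 in ex_s.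
transitivity (expand s) => //; rewrite -sk_s.
apply: plax_expand_skeleton => // x.
by rewrite sk_s -(com_exp_com sigma_ge2 x com_uv) (com_exp_plax sigma_ge2 x ex_s).
Qed.
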